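(* Let $A\subseteq B$ be a ring extension (commutative rings with identity) with the finite character. Then every $B$-regular and locally principal ideal of $A$ is $B$-invertible.
   Context: For an $A$-submodule $S$ of $B$: $S$ is $B$-regular if $SB=B$; $S$ is $B$-invertible if there is an $A$-submodule $U$ of $B$ with $SU=A$. The extension $A\subseteq B$ has the finite character if every $B$-regular ideal of $A$ is contained in only finitely many maximal ideals of $A$. An ideal $\mathfrak a$ of $A$ is locally principal if $\mathfrak aA_{\mathfrak m}$ is principal for every maximal ideal $\mathfrak m$ of $A$. *)

(* A ring extension A ⊆ B is modelled by a commutative ring
   B : comRingType together with a subring A of B given as a predicate. *)
From mathcomp Require Import all_boot all_algebra.
Set Implicit Arguments. Unset Strict Implicit. Unset Printing Implicit Defensive.
Import GRing.Theory.
Local Open Scope ring_scope.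

Section Ext.
Variables (B : comPzRingType) (A : B -> Prop).

Definition is_subring : Prop :=
  [/\ A 0, A 1, (forall x y, A x -> A y -> A (x - y)) &
      (forall x y, A x -> A y -> A (x * y))].

Definition is_Asubmodule (S : B -> Prop) : Prop :=
  [/\ S 0, (forall x y, S x -> S y -> S (x + y)) &
      (forall a x, A a -> S x -> S (a * x))].

Definition is_ideal (I : B -> Prop) : Prop :=
  is_Asubmodule I /\ (forall x, I x -> A x).

Definition prodmod (S T : B -> Prop) (x : B) : Prop :=
  exists n (s t : 'I_n -> B), (forall i, S (s i)) /\ (forall i, T (t i)) /\
    x = \sum_(i < n) s i * t i.

Definition B_regular (S : B -> Prop) : Prop :=
  forall x, prodmod S (fun _ => True) x.

Definition B_invertible (S : B -> Prop) : Prop :=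
  exists U, is_Asubmodule U /\ (forall x, prodmod S U x <-> A x).

Definition is_maximal (m : B -> Prop) : Prop :=
  [/\ is_ideal m, ~ m 1 &
      forall J, is_ideal J -> (forall x, m x -> J x) ->
        (forall x, J x <-> m x) \/ J 1].

Definition finite_character : Prop :=
  forall I, is_ideal I -> B_regular I ->
    exists ms : seq (B -> Prop),
      forall m, is_maximal m -> (forall x, I x -> m x) ->
        exists2 k, (k < size ms)%N & forall x, m x <-> nth (fun _ => False) ms k x.

(* Localization A_m: elements are fractions a/s (a ∈ A, s ∈ A \ m),
   represented as pairs, with the usual equivalence. *)
Definition is_frac (m : B -> Prop) (p : B * B) : Prop :=
  A p.1 /\ A p.2 /\ ~ m p.2.

Definition frac_eq (m : B -> Prop) (p q : B * B) : Prop :=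
  exists u, A u /\ ~ m u /\ u * (p.1 * q.2 - q.1 * p.2) = 0.

Definition in_ext (I m : B -> Prop) (p : B * B) : Prop :=
  exists x s, I x /\ A s /\ ~ m s /\ frac_eq m p (x, s).

Definition ext_principal (I m : B -> Prop) : Prop :=
  exists g, is_frac m g /\
    forall p, is_frac m p ->
      (in_ext I m p <->
       exists2 r, is_frac m r & frac_eq m p (g.1 * r.1, g.2 * r.2)).

Definition locally_principal (I : B -> Prop) : Prop :=
  forall m, is_maximal m -> ext_principal I m.

End Ext.

From mathcomp Require Import all_boot all_algebra.
From mathcomp Require Import boolp classical_sets ring.
Set Implicit Arguments. Unset Strict Implicit. Unset Printing Implicit Defensive.
Import GRing.Theory.
Local Open Scope classical_set_scope.
Local Open Scope ring_scope.

(* Write [1 = \sum_i x_i b_i] with [x_i] in [I]. The ideal of [A] generated by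
   the [x_i] is still [B]-regular, so by finite character it lies in only finitely
   many maximal ideals; adding to the [x_i] one local generator of [I] at each of
   them gives a finite family generating [I] at every maximal ideal, hence
   globally. Let [U = (A :_B I)]. At a maximal ideal [m] with local generator [x],
   a common denominator [t] outside [m] gives [t I ⊆ x A]; writing [t x_i = x e_i],
   the element [c = \sum_i e_i b_i] of [B] satisfies [x c = t] and [t c ∈ U], so
   [t^2 = x (t c)] is an element of [I U] outside [m]. Thus [I U = A]. *)

Section SubringExtension.
Variables (B : comPzRingType) (A : B -> Prop).

Section Products.
Variables S T : B -> Prop.

Lemma prodmod_mul s t : S s -> T t -> prodmod S T (s * t).
Proof. by move=> Ss Tt; exists 1%N, (fun=> s), (fun=> t); rewrite big_ord1. Qed.

Lemma prodmod_min (K : B -> Prop) : is_Asubmodule A K ->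
  (forall s t, S s -> T t -> K (s * t)) -> forall x, prodmod S T x -> K x.
Proof.
case=> K0 KD _ KST x [n [s [t [Ss [Tt ->]]]]].
by apply: (big_ind K) => // i _; apply: KST.
Qed.

Lemma prodmod_submodule : is_Asubmodule A S -> is_Asubmodule A (prodmod S T).
Proof.
case=> _ _ SM; split.
- by exists 0%N, (fun=> 0), (fun=> 0); do !split; [case | case | rewrite big_ord0].
- move=> x y [n [s [t [Ss [Tt ->]]]]] [n' [s' [t' [Ss' [Tt' ->]]]]].
  pose glue (f : 'I_n -> B) (f' : 'I_n' -> B) i :=
    match split i with inl j => f j | inr k => f' k end.
  exists (n + n')%N, (glue s s'), (glue t t'); split; last split.
  + by move=> i; rewrite /glue; case: split.
  + by move=> i; rewrite /glue; case: split.
  + rewrite big_split_ord /glue; congr (_ + _); apply: eq_bigr => i _.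
      by rewrite (unsplitK (inl _)).
    by rewrite (unsplitK (inr _)).
- move=> a x Aa [n [s [t [Ss [Tt ->]]]]].
  exists n, (fun i => a * s i), t; split; first by move=> i; apply: SM.
  by split=> //; rewrite mulr_sumr; apply: eq_bigr => i _; rewrite mulrA.
Qed.

End Products.

Hypothesis subA : is_subring A.

Lemma subring0 : A 0. Proof. by case: subA. Qed.
Lemma subring1 : A 1. Proof. by case: subA. Qed.
Lemma subringB x y : A x -> A y -> A (x - y).
Proof. by case: subA => _ _ AB _; apply: AB. Qed.

Lemma subringM x y : A x -> A y -> A (x * y).
Proof. by case: subA => _ _ _ AM; apply: AM. Qed.

Lemma subringD x y : A x -> A y -> A (x + y).
Proof.
move=> Ax Ay; rewrite -[y]opprK -[- y]sub0r.
by apply: subringB => //; apply: subringB => //; apply: subring0.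
Qed.

Lemma subring_submodule : is_Asubmodule A A.
Proof. by split; [apply: subring0 | apply: subringD | apply: subringM]. Qed.

Lemma prodmod_ideal S T : is_Asubmodule A S ->
  (forall s t, S s -> T t -> A (s * t)) -> is_ideal A (prodmod S T).
Proof.
move=> SM STA; split; first exact: prodmod_submodule.
exact: prodmod_min subring_submodule _.
Qed.

Definition ideal_span (zs : seq B) : B -> Prop := prodmod A (fun z => z \in zs).

Lemma ideal_span_ideal (zs : seq B) :
  (forall z, z \in zs -> A z) -> is_ideal A (ideal_span zs).
Proof.
by move=> zsA; apply: prodmod_ideal subring_submodule _ => a z Aa /zsA; apply: subringM.
Qed.

Lemma ideal_span_mem (zs : seq B) z : z \in zs -> ideal_span zs z.
Proof. by move=> zs_z; rewrite -[z]mul1r; apply: prodmod_mul subring1 zs_z. Qed.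

Lemma ideal_span_min (I : B -> Prop) (zs : seq B) :
  is_ideal A I -> (forall z, z \in zs -> I z) -> forall y, ideal_span zs y -> I y.
Proof.
case=> [[I0 ID IM] _] zsI; apply: prodmod_min => [|a z Aa /zsI]; first by split.
exact: IM.
Qed.

Definition principal (x y : B) : Prop := exists2 a, A a & y = x * a.

Lemma principal_submodule x : is_Asubmodule A (principal x).
Proof.
split.
- by exists 0; [apply: subring0 | rewrite mulr0].
- by move=> _ _ [a Aa ->] [b Ab ->]; exists (a + b); [apply: subringD | rewrite mulrDr].
- by move=> c _ Ac [a Aa ->]; exists (c * a); [apply: subringM | rewrite mulrCA].
Qed.

Definition colon (K : B -> Prop) (y a : B) : Prop := A a /\ K (a * y).

Lemma colon_ideal K y : is_Asubmodule A K -> is_ideal A (colon K y).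
Proof.
case=> K0 KD KM; split; last by move=> a [].
split.
- by split; [apply: subring0 | rewrite mul0r].
- by move=> a b [Aa Kay] [Ab Kby]; split; [apply: subringD | rewrite mulrDl; apply: KD].
- by move=> c a Ac [Aa Kay]; split; [apply: subringM | rewrite -mulrA; apply: KM].
Qed.

Definition conductor (I : B -> Prop) (b : B) : Prop := forall y, I y -> A (b * y).

Lemma conductor_submodule I : is_Asubmodule A (conductor I).
Proof.
split.
- by move=> y _; rewrite mul0r; apply: subring0.
- move=> b c Ub Uc y Iy; rewrite mulrDl.
  by apply: subringD; [apply: Ub | apply: Uc].
- by move=> a b Aa Ub y Iy; rewrite -mulrA; apply: subringM => //; apply: Ub.
Qed.

Lemma prod_conductor_ideal I : is_ideal A I -> is_ideal A (prodmod I (conductor I)).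
Proof.
by case=> IM _; apply: prodmod_ideal IM _ => y b Iy Ub; rewrite mulrC; apply: Ub.
Qed.

Lemma B_invertible_of_prod_conductor1 I : is_ideal A I ->
  prodmod I (conductor I) 1 -> B_invertible A I.
Proof.
move=> /prod_conductor_ideal [[_ _ IUM] IUA] IU1.
exists (conductor I); split; first exact: conductor_submodule.
by move=> x; split=> [/IUA // | Ax]; rewrite -[x]mulr1; apply: IUM.
Qed.

Definition outside (m : B -> Prop) (s : B) : Prop := A s /\ ~ m s.

Lemma outsideM m s t : is_maximal A m -> outside m s -> outside m t -> outside m (s * t).
Proof.
case=> [[[m0 mD mM] mA] _ mmax] [As nms] [At nmt]; split; first exact: subringM.
move=> mst; pose J y := exists2 z, m z & exists2 r, A r & y = z + s * r.
have hJ : is_ideal A J.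
  split; first split.
  - by exists 0 => //; exists 0; [apply: subring0 | rewrite mulr0 addr0].
  - move=> _ _ [z mz [r Ar ->]] [z' mz' [r' Ar' ->]].
    exists (z + z'); first exact: mD.
    by exists (r + r'); [apply: subringD | rewrite mulrDr addrACA].
  - move=> a _ Aa [z mz [r Ar ->]]; exists (a * z); first exact: mM.
    by exists (a * r); [apply: subringM | rewrite mulrDr mulrCA].
  - by move=> _ [z mz [r Ar ->]]; apply: subringD; [apply: mA | apply: subringM].
have mJ x : m x -> J x.
  by move=> mx; exists x => //; exists 0; [apply: subring0 | rewrite mulr0 addr0].
case: (mmax J hJ mJ) => [Jm | [z mz [r Ar e1]]].
  apply: nms; apply/Jm; exists 0 => //.
  by exists 1; [apply: subring1 | rewrite mulr1 add0r].
apply: nmt; have -> : t = t * z + r * (s * t) by rewrite -[t in LHS]mulr1 e1; ring.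
by apply: mD; apply: mM.
Qed.

Definition proper_ideal (I : B -> Prop) : Prop := is_ideal A I /\ ~ I 1.

Lemma proper_ideal_directed (I : B -> Prop) : I 0 ->
  (forall x y, I x -> I y ->
     exists2 J, proper_ideal J /\ J `<=` I & J x /\ J y) ->
  proper_ideal I.
Proof.
move=> I0 dir; split; first split; first split => //.
- move=> x y Ix Iy; have [J [[[[_ JD _] _] _] JI] [Jx Jy]] := dir x y Ix Iy.
  exact: JI (JD _ _ Jx Jy).
- move=> a x Aa Ix; have [J [[[[_ _ JM] _] _] JI] [Jx _]] := dir x x Ix Ix.
  exact: JI (JM _ _ Aa Jx).
- by move=> x Ix; have [J [[[_ JA] _] _] [Jx _]] := dir x x Ix Ix; apply: JA.
- by move=> I1; have [J [[_ nJ1] _] [J1 _]] := dir 1 1 I1 I1.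
Qed.

(* Zorn's lemma is applied to the sets [X] with [K `|` X] a proper ideal, so that
   the empty chain is harmless. *)
Lemma exists_maximal_over K : proper_ideal K -> exists2 m, is_maximal A m & K `<=` m.
Proof.
move=> pK; have [[[K0 _ _] _] _] := pK.
have chain F : F `<=` (fun X => proper_ideal (K `|` X)) -> total_on F subset ->
    proper_ideal (K `|` \bigcup_(X in F) X).
  move=> FP Ftot; apply: proper_ideal_directed; first by left.
  have pick z : (K `|` \bigcup_(X in F) X) z -> exists2 X, X = set0 \/ F X & (K `|` X) z.
    by case=> [Kz | [X FX Xz]]; [exists set0; left | exists X; right].
  have over X : X = set0 \/ F X ->
      proper_ideal (K `|` X) /\ K `|` X `<=` K `|` \bigcup_(X in F) X.
    case=> [-> | FX]; first by rewrite setU0; split=> // z Kz; left.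
    by split; [apply: FP | apply: setUS => z Xz; exists X].
  move=> x y /pick [X hX Xx] /pick [Y hY Yy].
  have [XY | YX] : X `<=` Y \/ Y `<=` X.
    by case: hX hY => [-> | FX] [-> | FY]; [left | left | right | apply: Ftot].
  - by exists (K `|` Y); [apply: over | split=> //; apply: setUS XY _ Xx].
  - by exists (K `|` X); [apply: over | split=> //; apply: setUS YX _ Yy].
have [X [[hM nM1] Xmax]] := Zorn_bigcup chain.
exists (K `|` X); last by move=> z Kz; left.
split => // J hJ MJ; case: (pselect (J 1)) => [J1 | nJ1]; [by right | left].
move=> z; split=> [Jz | /MJ //]; apply: contrapT => nMz; apply: (Xmax J).
  split=> [w Xw | JX]; first by apply: MJ; right.
  by apply: nMz; right; apply: JX.
by have /setUidPr -> : K `<=` J by move=> w Kw; apply: MJ; left.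
Qed.

Lemma ideal1_of_avoids_maximal K : is_ideal A K ->
  (forall m, is_maximal A m -> exists2 k, K k & ~ m k) -> K 1.
Proof.
move=> hK avoid; apply: contrapT => nK1.
have [m hm Km] := exists_maximal_over (conj hK nK1).
by have [k Kk nmk] := avoid m hm; apply: nmk; apply: Km.
Qed.

Definition local_generator (I m : B -> Prop) (x : B) : Prop :=
  forall y, I y -> exists2 s, outside m s & principal x (s * y).

Lemma exists_local_generator I m : is_ideal A I -> is_maximal A m ->
  ext_principal A I m -> exists2 x, I x & local_generator I m x.
Proof.
move=> [_ IA] hm [g [fg gen]].
have [A1 nm1] : outside m 1 by split; [apply: subring1 | case: hm].
have frac_eq1 p q : p.1 * q.2 - q.1 * p.2 = 0 -> frac_eq A m p q.
  by move=> e; exists 1; rewrite mul1r.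
have : in_ext A I m g.
  apply/(gen g fg); exists (1, 1) => //.
  by apply: frac_eq1; rewrite /= !mulr1 subrr.
case=> x [s [Ix [As [nms [u [Au [nmu eu]]]]]]]; exists x => // y Iy.
have /(gen (y, 1)) : in_ext A I m (y, 1).
  by exists y, 1; do !split => //; apply: frac_eq1; rewrite /= subrr.
case=> [|r [Ar1 Ar2] [v [Av [nmv ev]]]]; first by split; [apply: IA |].
have [_ out_g2] := fg; have [Ag2 _] := out_g2.
have [out_s out_u out_v] : [/\ outside m s, outside m u & outside m v] by [].
exists (v * u * s * g.2 * r.2); first by do !apply: outsideM => //.
exists (v * u * g.2 * r.1); first by do !apply: subringM => //.
apply/eqP; rewrite -subr_eq0; move: eu ev => /= eu ev.
have -> : v * u * s * g.2 * r.2 * y - x * (v * u * g.2 * r.1) =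
    u * s * (v * (y * (g.2 * r.2) - g.1 * r.1 * 1)) +
    v * r.1 * (u * (g.1 * s - x * g.2)) by ring.
by rewrite ev eu !mulr0 addr0.
Qed.

Lemma local_generator_denominator I m x (zs : seq B) :
  is_maximal A m -> local_generator I m x ->
  (forall z, z \in zs -> I z) -> (forall y, I y -> ideal_span zs y) ->
  exists2 t, outside m t & forall y, I y -> principal x (t * y).
Proof.
move=> hm lx zsI Izs.
have [t out_t zs_t] : exists2 t, outside m t & forall z, z \in zs -> principal x (t * z).
  elim: zs zsI {Izs} => [|z zs IH] zsI.
    by exists 1 => //; split; [apply: subring1 | case: hm].
  have [t out_t zs_t] := IH (fun w w_zs => zsI w (mem_behead (s := z :: zs) w_zs)).
  have [s out_s [a Aa esz]] := lx z (zsI z (mem_head z zs)).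
  have [[At _] [As _]] := (out_t, out_s).
  exists (t * s); first exact: outsideM.
  move=> w; rewrite in_cons => /predU1P [-> | /zs_t [b Ab etw]].
    by exists (t * a); [apply: subringM | rewrite -mulrA esz mulrCA].
  by exists (s * b); [apply: subringM | rewrite mulrAC etw -mulrA [b * s]mulrC].
exists t => // y /Izs.
apply: (prodmod_min (K := fun y => principal x (t * y))) => [|a z Aa /zs_t [b Ab etz]].
  have [P0 PD PM] := principal_submodule x.
  split=> [|y1 y2 ty1 ty2|a y1 Aa ty1]; first by rewrite mulr0.
    by rewrite mulrDr; apply: PD.
  by rewrite mulrCA; apply: PM.
by exists (a * b); [apply: subringM | rewrite mulrCA etz mulrCA].
Qed.

Lemma sqr_in_prod_conductor I x t : B_regular I -> I x -> A t ->
  (forall y, I y -> principal x (t * y)) -> prodmod I (conductor I) (t * t).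
Proof.
move=> reg Ix At tI; have [n [xs [bs [Ixs [_ e1]]]]] := reg 1.
have /fin_all_exists2 [e Ae exs] : forall i : 'I_n, exists2 e, A e & t * xs i = x * e.
  by move=> i; apply: tI.
pose c := \sum_(i < n) e i * bs i.
have xc : x * c = t.
  rewrite -[t]mulr1 e1 !mulr_sumr; apply: eq_bigr => i _.
  by rewrite !mulrA exs.
have Utc : conductor I (t * c).
  by move=> y /tI [a Aa ety]; rewrite mulrAC ety mulrAC xc; apply: subringM.
by rewrite -[X in _ * X]xc mulrCA; apply: prodmod_mul.
Qed.

Lemma B_invertible_of_finitely_generated I (zs : seq B) :
  is_ideal A I -> B_regular I -> locally_principal A I ->
  (forall z, z \in zs -> I z) -> (forall y, I y -> ideal_span zs y) ->
  B_invertible A I.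
Proof.
move=> hI reg lp zsI Izs; apply: B_invertible_of_prod_conductor1 => //.
apply: ideal1_of_avoids_maximal; first exact: prod_conductor_ideal.
move=> m hm; have [x Ix lx] := exists_local_generator hI hm (lp m hm).
have [t out_t tI] := local_generator_denominator hm lx zsI Izs.
exists (t * t); first exact: sqr_in_prod_conductor reg Ix out_t.1 tI.
by case: (outsideM hm out_t out_t).
Qed.

Lemma local_generators_span I (zs : seq B) : (forall y, I y -> A y) ->
  (forall z, z \in zs -> A z) ->
  (forall m, is_maximal A m -> exists2 w, w \in zs & ~ m w \/ local_generator I m w) ->
  forall y, I y -> ideal_span zs y.
Proof.
move=> IA zsA loc y Iy.
have hspan := ideal_span_ideal zsA; have [[_ _ spanM] _] := hspan.
have [_] : colon (ideal_span zs) y 1; last by rewrite mul1r.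
apply: ideal1_of_avoids_maximal; first by apply: colon_ideal; case: hspan.
move=> m hm; have [w zs_w [nmw | lw]] := loc m hm.
  exists w => //; split; first exact: zsA.
  by rewrite mulrC; apply: spanM; [apply: IA | apply: ideal_span_mem].
have [s [As nms] [a Aa esa]] := lw y Iy; exists s => //; split=> //.
by rewrite esa mulrC; apply: spanM => //; apply: ideal_span_mem.
Qed.

Lemma finitely_generated_of_finite_character I : finite_character A ->
  is_ideal A I -> B_regular I -> locally_principal A I ->
  exists zs, (forall z, z \in zs -> I z) /\ (forall y, I y -> ideal_span zs y).
Proof.
move=> fc hI reg lp; have [_ IA] := hI.
have [n [xs [bs [Ixs [_ e1]]]]] := reg 1.
have xsA z : z \in codom xs -> A z by case/codomP=> i ->; apply: IA.
have regJ : B_regular (ideal_span (codom xs)).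
  move=> b; exists n, xs, (fun i => bs i * b); split.
    by move=> i; apply: ideal_span_mem; apply: codom_f.
  by split=> //; rewrite -{1}[b]mul1r e1 mulr_suml; apply: eq_bigr => i _; rewrite mulrA.
have [ms hms] := fc _ (ideal_span_ideal xsA) regJ.
pose mth k := nth (fun=> False) ms k.
have /fin_all_exists [w hw] : forall k : 'I_(size ms),
    exists w, I w /\ (is_maximal A (mth k) -> local_generator I (mth k) w).
  move=> k; case: (pselect (is_maximal A (mth k))) => [mk | nmk]; last first.
    by exists 0; split=> //; case: hI => [[]].
  by have [w Iw lw] := exists_local_generator hI mk (lp _ mk); exists w.
pose zs := codom xs ++ codom w.
have zsI z : z \in zs -> I z.
  by rewrite mem_cat => /orP [] /codomP [i ->]; [apply: Ixs | case: (hw i)].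
exists zs; split=> //.
apply: local_generators_span => // [z /zsI | m hm]; first exact: IA.
case: (pselect (forall i, m (xs i))) => [xs_m | /existsNP [i nmi]]; last first.
  by exists (xs i); [rewrite mem_cat codom_f | left].
have [mI _ _] := hm; have xs_m' z : z \in codom xs -> m z by case/codomP=> j ->.
have [k ltk mk] := hms m hm (ideal_span_min mI xs_m').
have em : m = mth (Ordinal ltk) by apply/funext => z; apply/propext.
rewrite em in hm *; exists (w (Ordinal ltk)); first by rewrite mem_cat codom_f orbT.
by right; apply: (hw _).2.
Qed.

End SubringExtension.

Theorem corollary3p5 (B : comPzRingType) (A : B -> Prop) :
  is_subring A -> finite_character A ->
  forall I : B -> Prop, is_ideal A I -> B_regular I -> locally_principal A I ->
    B_invertible A I.
Proof.
move=> subA fc I hI reg lp.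
have [zs [zsI Izs]] := finitely_generated_of_finite_character subA fc hI reg lp.
exact: (B_invertible_of_finitely_generated subA hI reg lp zsI Izs).
Qed.
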